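(* Let ${\cal F}$ be a nonprincipal filter on $\omega$, and for sequences $\hat s=\{s_n\}$ with $s_n\in(0,\tfrac12]$ let $\mu_{\hat s}$ denote the corresponding product measure on $2^\omega$. (1) If $\hat p,\hat q$ are such sequences with $p_n\le q_n$ for all but finitely many $n$, and $\mu_{\hat q}({\cal F})=0$, then $\mu_{\hat p}({\cal F})=0$. (2) If ${\cal F}$ is nonmeasurable with respect to both $\mu_{\hat p}$ and $\mu_{\hat q}$, and $r_n=\min\{p_n,q_n\}$ for $n\in\omega$, then ${\cal F}$ is $\mu_{\hat r}$-nonmeasurable.
   Context: Subsets of $\omega$ are identified with their characteristic functions, so filters on $\omega$ are subsets of $2^\omega$. For $\hat s=\{s_n:n\in\omega\}$ with $s_n\in(0,\tfrac12]$, $\mu_{\hat s}$ is the product measure on $2^\omega$ with $\mu_{\hat s}(\{x:x(n)=1\})=s_n$ and $\mu_{\hat s}(\{x:x(n)=0\})=1-s_n$. *)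

From HB Require Import structures.
From mathcomp Require Import all_boot all_order all_algebra.
From mathcomp Require Import all_classical all_reals all_analysis.
Set Implicit Arguments. Unset Strict Implicit. Unset Printing Implicit Defensive.
Import Order.TTheory GRing.Theory Num.Theory.
Local Open Scope classical_set_scope.
Local Open Scope ring_scope.

(* 2^omega = nat -> bool; subsets of omega are identified with their
   characteristic functions, so a filter on omega is a set (nat -> bool). *)

Definition is_filter_omega (F : set (nat -> bool)) : Prop :=
  F (fun _ => true) /\
  ~ F (fun _ => false) /\
  (forall x y : nat -> bool, F x -> (forall n, x n -> y n) -> F y) /\
  (forall x y : nat -> bool, F x -> F y -> F (fun n => x n && y n)).

Definition nonprincipal_filter (F : set (nat -> bool)) : Prop :=
  is_filter_omega F /\
  (forall x : nat -> bool, (exists N, forall n, (N <= n)%N -> x n) -> F x).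

Definition admissible (R : realType) (s : nat -> R) : Prop :=
  forall n, 0 < s n <= 2^-1.

Definition cyl (t : seq bool) : set (nat -> bool) :=
  [set x | forall i, (i < size t)%N -> x i = nth false t i].

Definition cyl_weight (R : realType) (s : nat -> R) (t : seq bool) : R :=
  \prod_(i < size t) (if nth false t i then s i else 1 - s i).

(* outer measure of the product measure mu_s (covers by countably many
   basic cylinders); its Caratheodory-measurable sets form the completion
   of the product measure mu_s on 2^omega *)
Definition prod_outer (R : realType) (s : nat -> R) (A : set (nat -> bool))
  : \bar R :=
  ereal_inf [set (\sum_(0 <= k <oo) ((cyl_weight s (c k))%:E))%E
            | c in [set c : nat -> seq bool | A `<=` \bigcup_k cyl (c k)]].

Definition prod_null (R : realType) (s : nat -> R) (A : set (nat -> bool)) :=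
  prod_outer s A = 0%E.

Definition prod_measurable (R : realType) (s : nat -> R)
  (A : set (nat -> bool)) : Prop :=
  caratheodory_measurable (prod_outer s) A.

(* If [s n] is the probability that
   [f n X_n Y_n] holds for independent [X ~ mu_a] and [Y ~ mu_b], then the
   coordinatewise map [combine f] pushes mu_a x mu_b (realized as mu of the
   interleaved sequence) onto mu_s; and mu_a(A) mu_b(B) <= (mu_a x mu_b)(A x B),
   by Markov's inequality on the sections of a cylinder cover of A x B.
   With [f n = or] from some index on, mu_p(F) <= mu_q(F) whenever p <= q
   eventually, which is (1).  Letting [f n] pick the less likely coordinate
   gives mu_p(F) mu_q(F) <= mu_(min p q)(F), so (2) reduces to: a measurable
   nonprincipal filter is null (null sets being measurable).  Approximating F
   by finitely many cylinders and redrawing the coordinates beyond them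
   independently shows mu(F) mu(~F) = 0, the zero-one law for tail sets; and
   mu(~F) = 0 forces mu(F) = 0, because complementation maps F into ~F and
   mu_(1-s) onto mu_s, while mu_s(F) <= mu_(1-s)(F) as s_n <= 1/2. *)

From HB Require Import structures.
From mathcomp Require Import all_boot all_order all_algebra.
From mathcomp Require Import all_classical all_reals all_analysis.
From mathcomp Require Import ring lra.
Set Implicit Arguments. Unset Strict Implicit. Unset Printing Implicit Defensive.
Import Order.TTheory GRing.Theory Num.Theory.
Local Open Scope classical_set_scope.
Local Open Scope ring_scope.

Section bernoulli.
Variable R : numDomainType.

Definition prob_seq (s : nat -> R) := forall n, 0 <= s n <= 1.

Definition bern (p : R) (b : bool) := if b then p else 1 - p.

Lemma bern_ge0 p b : 0 <= p <= 1 -> 0 <= bern p b.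
Proof. by case/andP=> p0 p1; case: b => //=; rewrite subr_ge0. Qed.

End bernoulli.

Definition stail {X : Type} (f : nat -> X) : nat -> X := fun n => f n.+1.

Lemma prob_seq_stail (R : numDomainType) (s : nat -> R) :
  prob_seq s -> prob_seq (stail s).
Proof. by move=> hs n; exact: hs. Qed.

Lemma prob_seq_compl (R : numDomainType) (s : nat -> R) :
  prob_seq s -> prob_seq (fun n => 1 - s n).
Proof.
by move=> hs n; have /andP[s0 s1] := hs n; rewrite subr_ge0 s1 lerBlDr lerDl.
Qed.

Section cylinder_weight.
Variable R : realType.
Implicit Types (s : nat -> R) (t : seq bool).

Lemma cyl_weight_nil s : cyl_weight s [::] = 1.
Proof. by rewrite /cyl_weight big_ord0. Qed.

Lemma cyl_weight_cons s b t :
  cyl_weight s (b :: t) = bern (s 0%N) b * cyl_weight (stail s) t.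
Proof. by rewrite /cyl_weight /= big_ord_recl. Qed.

Lemma cyl_weight_ge0 s t : prob_seq s -> 0 <= cyl_weight s t.
Proof.
elim: t s => [|b t IH] s hs; first by rewrite cyl_weight_nil.
rewrite cyl_weight_cons mulr_ge0 //; first exact: bern_ge0.
exact/IH/prob_seq_stail.
Qed.

(* Covers are infinite sequences of cylinders; these cylinders, of weight at
   most [2^-K], pad a finite cover at arbitrarily small cost. *)
Fixpoint light_cyl s (K : nat) : seq bool :=
  if K is K'.+1 then (s 0%N <= 2^-1) :: light_cyl (stail s) K' else [::].

Lemma cyl_weight_light_cyl s K :
  prob_seq s -> cyl_weight s (light_cyl s K) <= 2^-1 ^+ K.
Proof.
elim: K s => [|K IH] s hs /=; first by rewrite cyl_weight_nil expr0.
rewrite cyl_weight_cons exprS ler_pM //.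
- exact: bern_ge0.
- exact/cyl_weight_ge0/prob_seq_stail.
- by rewrite /bern; case: ifPn => //; rewrite -ltNge; lra.
- exact/IH/prob_seq_stail.
Qed.

Lemma exists_pow2_ge (eps : R) : 0 < eps -> exists K, 2 <= eps * 2 ^+ K.
Proof.
move=> eps0; set K := Num.bound (2 / eps); exists K.
have hK : 2 / eps < K%:R by apply: archi_boundP; rewrite divr_ge0 ?ltW.
have hK2 : K%:R <= 2 ^+ K :> R by rewrite -natrX ler_nat ltnW // ltn_expl.
have : 2 / eps <= 2 ^+ K := le_trans (ltW hK) hK2.
by rewrite ler_pdivrMr // mulrC.
Qed.

End cylinder_weight.

Section prod_outer.
Variable R : realType.
Local Open Scope ereal_scope.
Variable s : nat -> R.
Hypothesis hs : prob_seq s.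
Local Notation mu := (prod_outer s).
Local Notation w t := (cyl_weight s t)%:E.

Lemma cyl_weightE_ge0 t : 0 <= w t.
Proof. by rewrite lee_fin cyl_weight_ge0. Qed.

Lemma prod_outer_ge0 A : 0 <= mu A.
Proof.
apply: le_ereal_inf_tmp => _ [c _ <-]; apply: nneseries_ge0 => k _ _.
exact: cyl_weightE_ge0.
Qed.

Lemma le_prod_outer : {homo mu : A B / A `<=` B >-> A <= B}.
Proof.
move=> A B AB; apply: ereal_inf_le_tmp => _ [c Bc <-]; exists c => //.
exact: subset_trans Bc.
Qed.

Lemma prod_outer_cover_le A (c : nat -> seq bool) :
  A `<=` \bigcup_k cyl (c k) -> mu A <= \sum_(k <oo) w (c k).
Proof. by move=> Ac; apply: ereal_inf_lbound; exists c. Qed.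

Lemma prod_outer_cyl_le A t : A `<=` cyl t -> mu A <= w t.
Proof.
move=> At; apply/lee_addgt0Pr => eps eps0.
have [K hK] := exists_pow2_ge eps0.
pose c k := if k is k'.+1 then light_cyl s (k' + K) else t.
apply: le_trans (@prod_outer_cover_le A c _) _.
  by move=> x /At xt; exists 0%N.
rewrite nneseries_recl //; last by move=> k _; exact: cyl_weightE_ge0.
rewrite leeD2l // -nneseries_addn; last by move=> k; exact: cyl_weightE_ge0.
apply: le_trans (epsilon_trick0 xpredT (ltW eps0)).
apply: lee_nneseries => [k _ _|k _]; first exact: cyl_weightE_ge0.
rewrite addn1 lee_fin; apply: le_trans (cyl_weight_light_cyl _ hs) _.
have p2 n : (0 < 2 ^+ n :> R)%R by rewrite exprn_gt0.
rewrite exprVn natrX ler_pdivlMr ?p2 // mulrC ler_pdivrMr ?p2 //.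
by rewrite exprD exprSr mulrCA ler_pM2l ?p2.
Qed.

Lemma prod_outer_cyl t : mu (cyl t) <= w t.
Proof. exact: prod_outer_cyl_le. Qed.

Lemma prod_outer_le1 A : mu A <= 1.
Proof.
by apply: le_trans (@prod_outer_cyl_le A [::] _) _; rewrite ?cyl_weight_nil.
Qed.

Lemma prod_outer0 : mu set0 = 0.
Proof.
apply/le_anti; rewrite prod_outer_ge0 andbT; apply/lee_addgt0Pr => eps eps0.
have [K hK] := exists_pow2_ge eps0.
apply: le_trans (@prod_outer_cyl_le set0 (light_cyl s K) _) _ => //.
rewrite add0e lee_fin; apply: le_trans (cyl_weight_light_cyl _ hs) _.
have p2 : (0 < 2 ^+ K :> R)%R by rewrite exprn_gt0.
by rewrite exprVn -div1r ler_pdivrMr //; apply: le_trans hK; rewrite ler1n.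
Qed.

Lemma prod_outer_fin_num A : mu A \is a fin_num.
Proof.
by rewrite ge0_fin_numE ?prod_outer_ge0 // (le_lt_trans (prod_outer_le1 A)) ?ltry.
Qed.

Lemma prod_outer_adherent A (eps : R) : (0 < eps)%R ->
  exists2 c : nat -> seq bool,
    A `<=` \bigcup_k cyl (c k) & \sum_(k <oo) w (c k) < mu A + eps%:E.
Proof.
by move=> eps0; have [_ [c Ac <-] lt] := lb_ereal_inf_adherent eps0
  (prod_outer_fin_num A); exists c.
Qed.

End prod_outer.

Section reindex_pairs.
Variable R : realType.
Local Open Scope ereal_scope.

Lemma nneseries_pair (u : nat -> nat -> \bar R) (e : nat -> nat * nat) :
  set_bij [set: nat] [set: nat * nat] e -> (forall i j, 0 <= u i j) ->
  \sum_(m <oo) u (e m).1 (e m).2 = \sum_(i <oo) \sum_(j <oo) u i j.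
Proof.
move=> e_bij u0; rewrite nneseries_esumT //.
rewrite -(@reindex_esum _ _ _ _ _ _ (fun k : nat * nat => u k.1 k.2) e_bij) /=.
rewrite nneseries_esumT; last by move=> i; exact: nneseries_ge0.
under eq_esum do rewrite nneseries_esumT //.
by rewrite esum_esum //; congr esum; apply/seteqP; split => // -[].
Qed.

End reindex_pairs.

Lemma exists_nat_pair_bij : exists e : nat -> nat * nat,
  set_bij [set: nat] [set: nat * nat] e.
Proof. by have /card_esym/ppcard_eqP[e] := card_nat2; exists e. Qed.

Section prod_outer_subadditive.
Variable R : realType.
Local Open Scope ereal_scope.
Variable s : nat -> R.
Hypothesis hs : prob_seq s.
Local Notation mu := (prod_outer s).
Local Notation w t := (cyl_weight s t)%:E.

(* Glue covers of the [A n] of excess [eps / 2 ^ n.+1] along a bijection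
   [nat -> nat * nat]. *)
Lemma prod_outer_sigma_subadditive (A : nat -> set (nat -> bool)) :
  mu (\bigcup_n A n) <= \sum_(n <oo) mu (A n).
Proof.
apply/lee_addgt0Pr => eps eps0.
have epsn n : (0 < eps / (2 ^ n.+1)%:R)%R by rewrite divr_gt0.
pose good n (c : nat -> seq bool) := A n `<=` \bigcup_k cyl (c k) /\
  \sum_(k <oo) w (c k) <= mu (A n) + (eps / (2 ^ n.+1)%:R)%:E.
have [G hG] : {G & forall n, good n (G n)}.
  apply: choice => n.
  have [c Ac lt] := prod_outer_adherent hs (A n) (epsn n).
  by exists c; split => //; exact: ltW.
have [e e_bij] := exists_nat_pair_bij; have [_ _ e_surj] := e_bij.
apply: le_trans (@prod_outer_cover_le _ s _ (fun m => G (e m).1 (e m).2) _) _.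
  move=> x [n _ /(hG n).1 [k _ xk]].
  by have [m _ emk] := e_surj (n, k) I; exists m => //; rewrite emk.
rewrite (nneseries_pair (u := fun n k => w (G n k)) e_bij); last first.
  by move=> *; exact: cyl_weightE_ge0.
have mu_ge0 n : 0 <= mu (A n) by exact: prod_outer_ge0.
apply: le_trans (epsilon_trick xpredT mu_ge0 (ltW eps0)).
apply: lee_nneseries => [n _ _|n _]; last exact: (hG n).2.
by apply: nneseries_ge0 => k _ _; exact: cyl_weightE_ge0.
Qed.

Lemma prod_outer_setU A B : mu (A `|` B) <= mu A + mu B.
Proof.
rewrite -bigcup2E; apply: le_trans (prod_outer_sigma_subadditive _) _.
rewrite (nneseries_split 0 2); last by move=> k _; exact: prod_outer_ge0.
rewrite add0n big_nat_recr // big_nat_recr // big_nil /= add0e.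
by rewrite eseries0 ?adde0 // => -[|[|k]] //= _ _; exact: prod_outer0.
Qed.

End prod_outer_subadditive.

Fixpoint in_cyl (t : seq bool) (x : nat -> bool) : bool :=
  if t is b :: t' then (x 0%N == b) && in_cyl t' (stail x) else true.

Lemma in_cylP t x : reflect (cyl t x) (in_cyl t x).
Proof.
elim: t x => [|b t IH] x /=; first by apply: ReflectT => i.
apply: (iffP andP) => [[/eqP x0 /IH xt] [|i] //= /xt //|xt].
split; first by apply/eqP; exact: (xt 0%N).
by apply/IH => i lti; exact: (xt i.+1).
Qed.

Lemma eq_in_cyl t x y : (forall i, (i < size t)%N -> x i = y i) ->
  in_cyl t x = in_cyl t y.
Proof.
elim: t x y => [|b t IH] x y //= xy.
by rewrite xy // (IH _ (stail y)) // => i lti; apply: xy.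
Qed.

Definition seqf (u : seq bool) : nat -> bool := nth false u.

Definition fcons (b : bool) (x : nat -> bool) : nat -> bool :=
  fun i => if i is j.+1 then x j else b.

Lemma seqf_cons b u : seqf (b :: u) = fcons b (seqf u).
Proof. by apply: funext => -[|i]. Qed.

Lemma fcons_stail x : fcons (x 0%N) (stail x) = x.
Proof. by apply: funext => -[|i]. Qed.

Definition determined_by (L : nat) (D : set (nat -> bool)) :=
  forall x y, (forall i, (i < L)%N -> x i = y i) -> D x -> D y.

Definition max_size (t : nat -> seq bool) N := (\max_(k < N) size (t k))%N.

Lemma size_le_max_size t k N : (k < N)%N -> (size (t k) <= max_size t N)%N.
Proof.
by move=> ltkN; have := @leq_bigmax _ (fun i : 'I_N => size (t i)) (Ordinal ltkN).
Qed.

Lemma max_size_succ t N : (max_size t N <= max_size t N.+1)%N.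
Proof. by rewrite /max_size big_ord_recr /= leq_maxl. Qed.

Lemma determined_by_cyls t N :
  determined_by (max_size t N) (\bigcup_(k < N) cyl (t k)).
Proof.
move=> x y xy [k ltkN xk]; exists k => // i lti; rewrite -xy ?xk //.
exact: leq_trans lti (size_le_max_size _ ltkN).
Qed.

Section finite_expectation.
Variable R : numDomainType.
Implicit Types (s : nat -> R) (f g : seq bool -> R).

Fixpoint fexpect s L f : R :=
  if L is L'.+1 then
    s 0%N * fexpect (stail s) L' (fun u => f (true :: u)) +
    (1 - s 0%N) * fexpect (stail s) L' (fun u => f (false :: u))
  else f [::].

Lemma eq_fexpect s L f g : (forall u, size u = L -> f u = g u) ->
  fexpect s L f = fexpect s L g.
Proof.
elim: L s f g => [|L IH] s f g fg /=; first exact: fg.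
by congr (_ * _ + _ * _); apply: IH => u su; apply: fg; rewrite /= su.
Qed.

Lemma fexpect_cst s L c : fexpect s L (fun _ => c) = c.
Proof. by elim: L s => [|L IH] s //=; rewrite !IH; ring. Qed.

Lemma fexpectD s L f g :
  fexpect s L (fun u => f u + g u) = fexpect s L f + fexpect s L g.
Proof. by elim: L s f g => [|L IH] s f g //=; rewrite !IH; ring. Qed.

Lemma fexpectZ s L c f :
  fexpect s L (fun u => c * f u) = c * fexpect s L f.
Proof. by elim: L s f => [|L IH] s f //=; rewrite !IH; ring. Qed.

Lemma fexpectB s L f g :
  fexpect s L (fun u => f u - g u) = fexpect s L f - fexpect s L g.
Proof.
rewrite -mulN1r -fexpectZ -fexpectD.
by apply: eq_fexpect => u _; rewrite mulN1r.
Qed.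

Lemma fexpect_sum s L M (F : nat -> seq bool -> R) :
  fexpect s L (fun u => \sum_(k < M) F k u) = \sum_(k < M) fexpect s L (F k).
Proof.
elim: M => [|M IH].
  rewrite big_ord0 -[RHS](fexpect_cst s L).
  by apply: eq_fexpect => u _; rewrite big_ord0.
rewrite big_ord_recr /= -IH -fexpectD.
by apply: eq_fexpect => u _; rewrite big_ord_recr.
Qed.

Lemma ler_fexpect s L f g : prob_seq s ->
  (forall u, size u = L -> f u <= g u) -> fexpect s L f <= fexpect s L g.
Proof.
elim: L s f g => [|L IH] s f g hs fg /=; first exact: fg.
have /andP[s0 s1] := hs 0%N.
by rewrite lerD // ler_wpM2l ?subr_ge0 //; apply: IH (prob_seq_stail hs) _ => u su;
  apply: fg; rewrite /= su.
Qed.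

Lemma fexpect_take s L k f :
  fexpect s (L + k) (fun u => f (take L u)) = fexpect s L f.
Proof.
elim: L s f => [|L IH] s f /=; last by rewrite -!IH.
by rewrite -(fexpect_cst s k (f [::])); apply: eq_fexpect => u _; rewrite take0.
Qed.

End finite_expectation.

Lemma fexpect_cyl (R : realType) (s : nat -> R) L t : (size t <= L)%N ->
  fexpect s L (fun u => (in_cyl t (seqf u))%:R) = cyl_weight s t.
Proof.
elim: t s L => [|b t IH] s L; first by rewrite cyl_weight_nil fexpect_cst.
case: L => [//|L] /= ltL; rewrite cyl_weight_cons.
have indE b' : (fun u => ((b' == b) && in_cyl t (stail (seqf (b' :: u))))%:R) =
    (fun u => (b' == b)%:R * (in_cyl t (seqf u))%:R :> R).
  by apply: funext => u /=; case: (b' == b); rewrite ?mul1r ?mul0r.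
rewrite !indE !fexpectZ IH //.
by case: b {indE} => /=; rewrite ?mul1r ?mul0r ?mulr0 ?addr0 ?add0r.
Qed.

Section prod_outer_determined.
Variable R : realType.
Local Open Scope ereal_scope.

Lemma prod_outer_cons_le (s : nat -> R) b (D : set (nat -> bool)) :
  prob_seq s ->
  prod_outer s [set z | z 0%N = b /\ D (stail z)] <=
  (bern (s 0%N) b)%:E * prod_outer (stail s) D.
Proof.
move=> hs; set A := [set z | _].
have cover_le c : D `<=` \bigcup_k cyl (c k) -> prod_outer s A <=
    (bern (s 0%N) b)%:E * \sum_(k <oo) (cyl_weight (stail s) (c k))%:E.
  move=> Dc; apply: le_trans (@prod_outer_cover_le _ s A (fun k => b :: c k) _) _.
    move=> z [z0 /Dc [k _ zk]]; exists k => // -[|i] //= /zk; exact.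
  rewrite -nneseriesZl; last by move=> k _; exact/cyl_weightE_ge0/prob_seq_stail.
  apply: lee_nneseries => [k _ _|k _]; first exact: cyl_weightE_ge0.
  by rewrite cyl_weight_cons EFinM.
have [b0|bpos] := eqVneq (bern (s 0%N) b) 0%R.
  have := cover_le (fun _ => [::]); rewrite b0 !mul0e; apply.
  by move=> y _; exists 0%N.
have b0 : (0 < bern (s 0%N) b)%R by rewrite lt_neqAle eq_sym bpos bern_ge0.
rewrite -lee_pdivrMl //; apply: le_ereal_inf_tmp => _ [c Dc <-].
by rewrite lee_pdivrMl //; exact: cover_le.
Qed.

Lemma prod_outer_determined_le L (s : nat -> R) D : prob_seq s ->
  determined_by L D ->
  prod_outer s D <= (fexpect s L (fun u => (`[< D (seqf u) >])%:R))%:E.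
Proof.
elim: L s D => [|L IH] s D hs hD /=.
  have [Du|nDu] := pselect (D (seqf [::])).
    by rewrite asboolT //; exact: prod_outer_le1.
  rewrite asboolF // (_ : D = set0) ?prod_outer0 //.
  by apply/seteqP; split => // x Dx; apply: nDu; apply: hD Dx.
pose Db b := [set y | D (fcons b y)].
have hDb b : determined_by L (Db b).
  by move=> x y xy; apply: hD => -[|i] //= /xy.
have Dsplit : D `<=` [set z | z 0%N = true /\ Db true (stail z)] `|`
                    [set z | z 0%N = false /\ Db false (stail z)].
  by move=> z Dz; rewrite /Db /=; case z0: (z 0%N); [left|right];
    rewrite -z0 fcons_stail.
apply: le_trans (le_prod_outer s Dsplit) _.
apply: le_trans (prod_outer_setU hs _ _) _.
have DbE b : (fun u => (`[< D (seqf (b :: u)) >])%:R) =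
    (fun u => (`[< Db b (seqf u) >])%:R :> R).
  by apply: funext => u; rewrite seqf_cons.
have [s0 s1] := andP (hs 0%N).
rewrite !DbE EFinD !EFinM; apply: leeD.
- apply: le_trans (prod_outer_cons_le true (Db true) hs) _.
  by apply: lee_wpmul2l; [rewrite lee_fin|exact/IH/hDb/prob_seq_stail].
- apply: le_trans (prod_outer_cons_le false (Db false) hs) _.
  by apply: lee_wpmul2l; [rewrite lee_fin subr_ge0|exact/IH/hDb/prob_seq_stail].
Qed.

End prod_outer_determined.

Section markov.
Variable R : realType.
Variables (s : nat -> R) (c : nat -> R) (t : nat -> seq bool) (th : R).
Hypotheses (hs : prob_seq s) (c_ge0 : forall k, 0 <= c k) (th_gt0 : 0 < th).

Definition cyl_sum N x := \sum_(k < N) c k * (in_cyl (t k) x)%:R.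
Definition cyl_sum_gt N := [set x | th < cyl_sum N x].
Definition cyl_sum_gt_mass N :=
  fexpect s (max_size t N) (fun u => ((th < cyl_sum N (seqf u))%R)%:R).

Lemma cyl_sum_ge0 N x : 0 <= cyl_sum N x.
Proof. by apply: sumr_ge0 => k _; rewrite mulr_ge0. Qed.

Lemma cyl_sum_le_succ N x : cyl_sum N x <= cyl_sum N.+1 x.
Proof. by rewrite /cyl_sum big_ord_recr /= lerDl mulr_ge0. Qed.

Lemma eq_cyl_sum N x y : (forall i, (i < max_size t N)%N -> x i = y i) ->
  cyl_sum N x = cyl_sum N y.
Proof.
move=> xy; apply: eq_bigr => k _; rewrite (@eq_in_cyl (t k) x y) // => i lti.
by apply: xy; apply: leq_trans lti (@size_le_max_size t k N (ltn_ord k)).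
Qed.

Lemma cyl_sum_gt_determined N L : (max_size t N <= L)%N ->
  determined_by L (cyl_sum_gt N).
Proof.
move=> ltL x y xy; rewrite /cyl_sum_gt /= (@eq_cyl_sum N x y) // => i lti.
by apply: xy; apply: leq_trans lti ltL.
Qed.

Lemma cyl_sum_gt_mass_take N k :
  fexpect s (max_size t N + k) (fun u => ((th < cyl_sum N (seqf u))%R)%:R) =
  cyl_sum_gt_mass N.
Proof.
rewrite /cyl_sum_gt_mass -[RHS](fexpect_take s _ k).
apply: eq_fexpect => u _; congr (((th < _)%R)%:R).
by apply: eq_cyl_sum => i lti; rewrite /seqf nth_take.
Qed.

Lemma cyl_sum_gt_mass0 : cyl_sum_gt_mass 0 = 0.
Proof.
by rewrite /cyl_sum_gt_mass /max_size big_ord0 /= /cyl_sum big_ord0 ltNge ltW.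
Qed.

Lemma cyl_sum_gt_mass_le N :
  th * cyl_sum_gt_mass N <= \sum_(k < N) c k * cyl_weight s (t k).
Proof.
rewrite /cyl_sum_gt_mass -fexpectZ.
apply: le_trans (ler_fexpect (g := fun u => cyl_sum N (seqf u)) hs _) _.
  move=> u _; case: (boolP (th < _)) => [/ltW|_]; rewrite ?mulr1 ?mulr0 //.
  exact: cyl_sum_ge0.
rewrite (fexpect_sum _ _ _ (fun k u => c k * (in_cyl (t k) (seqf u))%:R)).
apply: ler_sum => k _; rewrite fexpectZ fexpect_cyl //.
exact: size_le_max_size.
Qed.

Local Open Scope ereal_scope.

Lemma prod_outer_cyl_sum_gt_succ N :
  prod_outer s (cyl_sum_gt N.+1 `\` cyl_sum_gt N) <=
  (cyl_sum_gt_mass N.+1 - cyl_sum_gt_mass N)%:E.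
Proof.
have lenN := max_size_succ t N.
have -> : (cyl_sum_gt_mass N.+1 - cyl_sum_gt_mass N)%R = fexpect s (max_size t N.+1)
    (fun u => (`[< (cyl_sum_gt N.+1 `\` cyl_sum_gt N) (seqf u) >])%:R).
  rewrite -(cyl_sum_gt_mass_take N (max_size t N.+1 - max_size t N)) subnKC //.
  rewrite /cyl_sum_gt_mass -fexpectB; apply: eq_fexpect => u _.
  rewrite /cyl_sum_gt /setD /=; have [ltN|geN] := boolP (th < cyl_sum N (seqf u))%R.
    by rewrite (lt_le_trans ltN (cyl_sum_le_succ _ _)) subrr asboolF // => -[].
  rewrite subr0; case: (boolP (th < cyl_sum N.+1 (seqf u))%R) => ltN1.
    by rewrite asboolT //; split => //; apply/negP.
  by rewrite asboolF // => -[].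
apply: prod_outer_determined_le hs _.
move=> x y xy [xN1 xN]; split; first exact: cyl_sum_gt_determined xy xN1.
by move=> /(cyl_sum_gt_determined lenN) yN; apply/xN/yN => i /xy.
Qed.

Lemma bigcup_cyl_sum_gt :
  \bigcup_N cyl_sum_gt N `<=` \bigcup_N (cyl_sum_gt N.+1 `\` cyl_sum_gt N).
Proof.
move=> x [N _ xN]; have exN : exists N, (th < cyl_sum N x)%R by exists N.
case: (ex_minnP exN) => -[|m] xm minm.
  by move: xm; rewrite /cyl_sum big_ord0 ltNge ltW.
by exists m => //; split => // /minm; rewrite ltnn.
Qed.

Theorem markov_cyl_sum : th%:E * prod_outer s (\bigcup_N cyl_sum_gt N) <=
  \sum_(k <oo) (c k * cyl_weight s (t k))%:E.
Proof.
set S := \sum_(k <oo) _.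
have S_ge : \sum_(N <oo) prod_outer s (cyl_sum_gt N.+1 `\` cyl_sum_gt N)
    <= th^-1%:E * S.
  apply: lime_le; first by apply: is_cvg_nneseries => n _ _; exact: prod_outer_ge0.
  apply: nearW => M /=.
  apply: le_trans (_ : \sum_(0 <= N < M)
      (cyl_sum_gt_mass N.+1 - cyl_sum_gt_mass N)%:E <= _).
    by apply: lee_sum => N _; exact: prod_outer_cyl_sum_gt_succ.
  rewrite sumEFin telescope_sumr // cyl_sum_gt_mass0 subr0.
  apply: le_trans (_ : (th^-1 * \sum_(k < M) c k * cyl_weight s (t k))%:E <= _).
    by rewrite lee_fin ler_pdivlMl //; exact: cyl_sum_gt_mass_le.
  rewrite EFinM; apply: lee_wpmul2l; first by rewrite lee_fin invr_ge0 ltW.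
  rewrite -sumEFin -(big_mkord xpredT (fun k => (c k * cyl_weight s (t k))%:E)).
  by apply: nneseries_lim_ge => k _ _; rewrite lee_fin mulr_ge0 ?cyl_weight_ge0.
apply: le_trans (_ : th%:E * (th^-1%:E * S) <= _).
  apply: lee_wpmul2l; first by rewrite lee_fin ltW.
  apply: le_trans S_ge.
  apply: le_trans (le_prod_outer s bigcup_cyl_sum_gt) _.
  exact: prod_outer_sigma_subadditive.
by rewrite muleA -EFinM mulfV ?gt_eqF // mul1e.
Qed.

End markov.

Fixpoint interleave {X : Type} (a b : nat -> X) (n : nat) : X :=
  if n is n'.+1 then interleave b (stail a) n' else a 0%N.

Definition evens {X : Type} (z : nat -> X) : nat -> X := fun i => z i.*2.
Definition odds {X : Type} (z : nat -> X) : nat -> X := fun i => z i.*2.+1.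

Lemma evens_interleave (X : Type) (a b : nat -> X) : evens (interleave a b) = a.
Proof.
by apply: funext => i; rewrite /evens; elim: i a b => [|i IH] a b //=; rewrite IH.
Qed.

Lemma odds_interleave (X : Type) (a b : nat -> X) : odds (interleave a b) = b.
Proof.
by apply: funext => i; rewrite /odds /= -[LHS]/(evens _ i) evens_interleave.
Qed.

Fixpoint evens_seq {X : Type} (t : seq X) : seq X :=
  if t is x :: t' then x :: odds_seq t' else [::]
with odds_seq {X : Type} (t : seq X) : seq X :=
  if t is _ :: t' then evens_seq t' else [::].

Lemma in_cyl_interleave t (a b : nat -> bool) :
  in_cyl t (interleave a b) = in_cyl (evens_seq t) a && in_cyl (odds_seq t) b.
Proof.
elim: t a b => [|x t IH] a b //=; rewrite IH /=.
by case: (a 0%N == x); rewrite //= andbC.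
Qed.

Section interleave_weight.
Variable R : realType.

Lemma prob_seq_interleave (a b : nat -> R) :
  prob_seq a -> prob_seq b -> prob_seq (interleave a b).
Proof.
by move=> ha hb n; elim: n a b ha hb => [|n IH] a b ha hb //=;
  apply: IH (prob_seq_stail ha).
Qed.

Lemma cyl_weight_interleave t (a b : nat -> R) :
  cyl_weight (interleave a b) t =
  cyl_weight a (evens_seq t) * cyl_weight b (odds_seq t).
Proof.
elim: t a b => [|x t IH] a b /=; first by rewrite !cyl_weight_nil mulr1.
by rewrite !cyl_weight_cons [stail _]/= IH /=; ring.
Qed.

End interleave_weight.

Definition combine (f : nat -> bool -> bool -> bool) (z : nat -> bool) :
  nat -> bool := fun i => f i (evens z i) (odds z i).

Section combine.
Variable R : realType.

Definition bern2 (p q : R) (g : bool -> bool -> bool) : R :=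
  \sum_(x : bool) \sum_(y : bool) bern p x * bern q y * (g x y)%:R.

Lemma bern_bern2 p q g c : bern (bern2 p q g) c =
  \sum_(x : bool) \sum_(y : bool) bern p x * bern q y * (g x y == c)%:R.
Proof.
rewrite /bern2 /bern !big_bool /=.
by case: c; case: (g true true); case: (g true false);
  case: (g false true); case: (g false false) => /=; ring.
Qed.

Local Open Scope ereal_scope.

Lemma prod_outer_cons2_le (a b : nat -> R) x y D :
  prob_seq a -> prob_seq b ->
  prod_outer (interleave a b)
    [set z | z 0%N = x /\ z 1%N = y /\ D (stail (stail z))]
  <= (bern (a 0%N) x * bern (b 0%N) y)%:E *
     prod_outer (interleave (stail a) (stail b)) D.
Proof.
move=> ha hb; have hab := prob_seq_interleave ha hb.
have hba := prob_seq_interleave hb (prob_seq_stail ha).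
have -> : [set z | z 0%N = x /\ z 1%N = y /\ D (stail (stail z))] =
  [set z | z 0%N = x /\ [set w | w 0%N = y /\ D (stail w)] (stail z)] by [].
apply: le_trans (prod_outer_cons_le x _ hab) _.
rewrite EFinM -muleA; apply: lee_wpmul2l; first by rewrite lee_fin bern_ge0.
exact: (prod_outer_cons_le y D hba).
Qed.

Lemma prod_outer_combine_cyl_le t f (a b s : nat -> R) :
  prob_seq a -> prob_seq b -> (forall i, s i = bern2 (a i) (b i) (f i)) ->
  prod_outer (interleave a b) [set z | in_cyl t (combine f z)] <=
  (cyl_weight s t)%:E.
Proof.
elim: t f a b s => [|c t IH] f a b s ha hb hs.
  by rewrite cyl_weight_nil; exact/prod_outer_le1/prob_seq_interleave.
have hab := prob_seq_interleave ha hb.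
pose Q x y := if f 0%N x y == c then [set z | in_cyl t (combine (stail f) z)]
  else set0.
pose A x y := [set z | z 0%N = x /\ z 1%N = y /\ Q x y (stail (stail z))].
have A_le x y : prod_outer (interleave a b) (A x y) <=
    (bern (a 0%N) x * bern (b 0%N) y * ((f 0%N x y == c)%:R *
      cyl_weight (stail s) t))%:E.
  apply: le_trans (prod_outer_cons2_le x y (Q x y) ha hb) _.
  rewrite [leRHS]EFinM; apply: lee_wpmul2l.
    by rewrite lee_fin mulr_ge0 ?bern_ge0.
  rewrite /Q; case: (f 0%N x y == c); last by rewrite mul0r prod_outer0 //;
    exact/prob_seq_interleave/prob_seq_stail/hb/prob_seq_stail.
  rewrite mul1r; apply: IH; [exact: prob_seq_stail..|] => i; exact: hs.
have cover : [set z | in_cyl (c :: t) (combine f z)] `<=`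
    (A true true `|` A true false) `|` (A false true `|` A false false).
  move=> z /= /andP[/eqP fz tz].
  have Az : A (z 0%N) (z 1%N) z.
    by do 2 split => //; rewrite /Q [f _ _ _]fz eqxx.
  by case: (z 0%N) (z 1%N) Az => -[];
    [left; left|left; right|right; left|right; right].
apply: le_trans (le_prod_outer _ cover) _.
apply: le_trans (prod_outer_setU hab _ _) _.
apply: le_trans (leeD (prod_outer_setU hab _ _) (prod_outer_setU hab _ _)) _.
apply: le_trans (leeD (leeD (A_le _ _) (A_le _ _)) (leeD (A_le _ _) (A_le _ _))) _.
rewrite -!EFinD lee_fin cyl_weight_cons hs bern_bern2 !big_bool /=.
lra.
Qed.

End combine.

Lemma prod_outer_combine_le (R : realType) f (a b s : nat -> R) S :
  prob_seq a -> prob_seq b -> (forall i, s i = bern2 (a i) (b i) (f i)) ->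
  (prod_outer (interleave a b) (combine f @^-1` S) <= prod_outer s S)%E.
Proof.
move=> ha hb hs; have hab := prob_seq_interleave ha hb.
apply: le_ereal_inf_tmp => _ [c Sc <-].
have cover : combine f @^-1` S `<=`
    \bigcup_k [set z | in_cyl (c k) (combine f z)].
  by move=> z /Sc [k _ /in_cylP zk]; exists k.
apply: le_trans (le_prod_outer _ cover) _.
apply: le_trans (prod_outer_sigma_subadditive hab _) _.
apply: lee_nneseries => [k _ _|k _]; first exact: prod_outer_ge0.
exact: prod_outer_combine_cyl_le.
Qed.

Lemma open_cyl t : @open cantor_space (cyl t).
Proof.
pose C n : set cantor_space := [set x | forall i, (i < n)%N -> x i = nth false t i].
suff openC n : open (C n) by exact: openC (size t).
elim: n => [|n IH].
  by rewrite (_ : C 0%N = setT); [exact: openT|apply/seteqP; split].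
rewrite (_ : C n.+1 =
    C n `&` @proj nat (fun _ => bool) n @^-1` [set nth false t n]).
  apply: openI => //; apply: open_comp => [x _|]; first exact: proj_continuous.
  exact: discrete_open.
apply/seteqP; split => x.
  by move=> Cx; split => [i lti|]; apply: Cx => //; exact: ltnW.
by move=> [Cx xn] i; rewrite ltnS leq_eqVlt => /predU1P[->|/Cx].
Qed.

Lemma cyl_cover_finite (c : nat -> seq bool) : setT `<=` \bigcup_k cyl (c k) ->
  exists N, setT `<=` \bigcup_(k < N) cyl (c k).
Proof.
move=> cover; have := cantor_space_compact.
rewrite compact_cover => /(_ nat setT (fun k => cyl (c k))) [].
- by move=> k _; exact: open_cyl.
- by move=> x _; have [k _ xk] := cover x I; exists k.
move=> D _ Dcover; exists (\max_(k <- finmap.enum_fset D) k).+1 => x _.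
have [k kD xk] := Dcover x I; exists k => //=.
by rewrite ltnS; apply: (@leq_bigmax_seq _ _ xpredT (fun k => k)).
Qed.

Section prod_outer_setT.
Variable R : realType.
Variable s : nat -> R.
Hypothesis hs : prob_seq s.

Lemma sum_cyl_weight_ge1 (c : nat -> seq bool) N :
  setT `<=` \bigcup_(k < N) cyl (c k) -> 1 <= \sum_(k < N) cyl_weight s (c k).
Proof.
move=> cover; rewrite -(fexpect_cst s (max_size c N) 1).
have -> : \sum_(k < N) cyl_weight s (c k) =
    fexpect s (max_size c N) (fun u => \sum_(k < N) (in_cyl (c k) (seqf u))%:R).
  rewrite (fexpect_sum _ _ _ (fun k u => (in_cyl (c k) (seqf u))%:R)).
  by apply: eq_bigr => k _; rewrite fexpect_cyl // size_le_max_size.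
apply: ler_fexpect => // u _; have [k ltkN uk] := cover (seqf u) I.
rewrite (bigD1 (Ordinal ltkN)) //= (introT (in_cylP _ _) uk) lerDl.
by apply: sumr_ge0 => i _; rewrite ler0n.
Qed.

Local Open Scope ereal_scope.

Lemma prod_outer_setT : prod_outer s setT = 1.
Proof.
apply/le_anti; rewrite prod_outer_le1 //=.
apply: le_ereal_inf_tmp => _ [c cover <-].
have [N hN] := cyl_cover_finite cover.
apply: le_trans (_ : (\sum_(k < N) cyl_weight s (c k))%:E <= _).
  by rewrite lee_fin; exact: sum_cyl_weight_ge1.
rewrite -sumEFin -(big_mkord xpredT (fun k => (cyl_weight s (c k))%:E)).
by apply: nneseries_lim_ge => k _ _; exact: cyl_weightE_ge0.
Qed.

End prod_outer_setT.

Lemma exists_psum_gt (R : realType) (u : nat -> R) th : (forall k, 0 <= u k) ->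
  (th%:E < \sum_(k <oo) (u k)%:E)%E -> exists N, th < \sum_(k < N) u k.
Proof.
move=> u_ge0 thu; apply/not_existsP => le_th; move: thu; apply/negP.
rewrite -leNgt; apply: lime_le.
  by apply: is_cvg_nneseries => n _ _; rewrite lee_fin.
apply: nearW => N /=; rewrite sumEFin lee_fin big_mkord.
by have := le_th N; rewrite ltNge => /negP; rewrite negbK.
Qed.

Section prod_outer_rectangle.
Variable R : realType.
Local Open Scope ereal_scope.
Variables (a b : nat -> R) (A B : set (nat -> bool)).
Hypotheses (ha : prob_seq a) (hb : prob_seq b).

Let AB := [set z | A (evens z) /\ B (odds z)].

(* Each section of a cylinder cover of [A x B] over [x \in A] covers [B]. *)
Lemma rect_cover_section_gt (c : nat -> seq bool) x (th : R) :
  AB `<=` \bigcup_k cyl (c k) -> A x -> th%:E < prod_outer b B ->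
  exists N, (th < cyl_sum (fun k => cyl_weight b (odds_seq (c k)))
                          (fun k => evens_seq (c k)) N x)%R.
Proof.
move=> ABc Ax thB.
pose Q k := if in_cyl (evens_seq (c k)) x then cyl (odds_seq (c k)) else set0.
have cover : B `<=` \bigcup_k Q k.
  move=> y By; have : AB (interleave x y).
    by split; rewrite ?evens_interleave ?odds_interleave.
  move=> /ABc [k _ /in_cylP]; rewrite in_cyl_interleave => /andP[xk yk].
  by exists k => //; rewrite /Q xk; exact/in_cylP.
have B_le : prod_outer b B <= \sum_(k <oo)
    ((in_cyl (evens_seq (c k)) x)%:R * cyl_weight b (odds_seq (c k)))%:E.
  apply: le_trans (le_prod_outer _ cover) _.
  apply: le_trans (prod_outer_sigma_subadditive hb _) _.
  apply: lee_nneseries => [k _ _|k _]; first exact: prod_outer_ge0.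
  rewrite /Q; case: (in_cyl _ x); first by rewrite mul1r prod_outer_cyl.
  by rewrite mul0r prod_outer0.
have [k|N ltN] := exists_psum_gt _ (lt_le_trans thB B_le).
  by rewrite mulr_ge0 ?ler0n ?cyl_weight_ge0.
by exists N; rewrite /cyl_sum; under eq_bigr do rewrite mulrC.
Qed.

Lemma prod_outer_rect_gt (th : R) : (0 < th)%R -> th%:E < prod_outer b B ->
  th%:E * prod_outer a A <= prod_outer (interleave a b) AB.
Proof.
move=> th0 thB; apply: le_ereal_inf_tmp => _ [c ABc <-].
pose cc k := cyl_weight b (odds_seq (c k)); pose tt k := evens_seq (c k).
have cc_ge0 k : (0 <= cc k)%R by exact: cyl_weight_ge0.
apply: le_trans (_ : th%:E * prod_outer a (\bigcup_N cyl_sum_gt cc tt th N) <= _).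
  apply: lee_wpmul2l; first by rewrite lee_fin ltW.
  apply: le_prod_outer => x Ax.
  by have [N ?] := rect_cover_section_gt ABc Ax thB; exists N.
apply: le_trans (markov_cyl_sum tt ha cc_ge0 th0) _.
apply: lee_nneseries => [k _ _|k _].
  by rewrite lee_fin mulr_ge0 ?cyl_weight_ge0.
by rewrite cyl_weight_interleave mulrC.
Qed.

Theorem prod_outer_rect_ge :
  prod_outer a A * prod_outer b B <= prod_outer (interleave a b) AB.
Proof.
rewrite muleC; apply/lee_mul01Pr; first by rewrite mule_ge0 ?prod_outer_ge0.
move=> r /andP[r0 r1]; rewrite muleA.
have [B0|] := eqVneq (prod_outer b B) 0.
  by rewrite B0 mule0 mul0e; exact/prod_outer_ge0/prob_seq_interleave.
rewrite -(fineK (prod_outer_fin_num hb B)) -EFinM eqe => Bn0.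
have B_gt0 : (0 < fine (prod_outer b B))%R.
  by rewrite lt_neqAle eq_sym Bn0 fine_ge0 ?prod_outer_ge0.
apply: prod_outer_rect_gt; first by rewrite mulr_gt0.
by rewrite -[ltRHS](fineK (prod_outer_fin_num hb B)) lte_fin gtr_pMl.
Qed.

End prod_outer_rectangle.

Definition upward_closed (F : set (nat -> bool)) :=
  forall x y : nat -> bool, F x -> (forall n, x n -> y n) -> F y.

Definition tail_set (F : set (nat -> bool)) :=
  forall x y : nat -> bool,
  (exists N, forall n, (N <= n)%N -> x n = y n) -> F x -> F y.

Section nonprincipal_filter.
Variable F : set (nat -> bool).
Hypothesis hF : nonprincipal_filter F.

Lemma nonprincipal_filter_upward : upward_closed F.
Proof. by case: hF => -[_ [_ []]]. Qed.

Lemma nonprincipal_filter_meet x y : F x -> F y -> F (fun n => x n && y n).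
Proof. by case: hF => -[_ [_ [_ meet]]] _; exact: meet. Qed.

Lemma nonprincipal_filter_tail : tail_set F.
Proof.
move=> x y [N xy] Fx.
have FN : F (fun n => (N <= n)%N) by case: hF => _ cofin; apply: cofin; exists N.
apply: nonprincipal_filter_upward (nonprincipal_filter_meet Fx FN) _.
by move=> n /andP[xn /xy <-].
Qed.

Lemma nonprincipal_filter_compl x : F x -> ~ F (fun n => ~~ x n).
Proof.
move=> Fx Fnx; case: hF => -[_ [F0 _]] _; apply: F0.
by apply: nonprincipal_filter_upward (nonprincipal_filter_meet Fx Fnx) _ => n;
  case: (x n).
Qed.

End nonprincipal_filter.

Section couplings.
Variable R : realType.
Local Open Scope ereal_scope.

Lemma prod_outer_evens_ge (a b : nat -> R) A : prob_seq a -> prob_seq b ->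
  prod_outer a A <= prod_outer (interleave a b) (evens @^-1` A).
Proof.
move=> ha hb; have := prod_outer_rect_ge A setT ha hb.
rewrite prod_outer_setT // mule1 => /le_trans; apply.
by apply: le_prod_outer => z [].
Qed.

(* Couple [X_n ~ bern (p n)] with [X_n || Y_n ~ bern (q n)] from [N] on. *)
Lemma le_prod_outer_tail (p q : nat -> R) N F :
  prob_seq p -> prob_seq q -> (forall n, (p n < 1)%R) ->
  (forall n, (N <= n)%N -> (p n <= q n)%R) ->
  upward_closed F -> tail_set F -> prod_outer p F <= prod_outer q F.
Proof.
move=> hp hq p_lt1 pq Fup Ftail.
pose b n := if (n < N)%N then q n else ((q n - p n) / (1 - p n))%R.
pose f n (x y : bool) := if (n < N)%N then y else x || y.
have hb : prob_seq b.
  move=> n; rewrite /b; case: ltnP => [_|leNn]; first exact: hq.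
  have := pq n leNn; have := p_lt1 n; have /andP[p0 _] := hp n.
  have /andP[_ q1] := hq n => pn1 pqn.
  have p1 : (0 < 1 - p n)%R by rewrite subr_gt0.
  apply/andP; split; first by apply: divr_ge0; [rewrite subr_ge0|exact: ltW].
  by rewrite ler_pdivrMr // mul1r lerD2r.
have qE n : q n = bern2 (p n) (b n) (f n).
  rewrite /bern2 /bern !big_bool /f /b; case: ifP => _ /=; first by ring.
  by field; rewrite subr_eq0 eq_sym lt_eqF.
apply: le_trans (prod_outer_evens_ge F hp hb) _.
apply: le_trans (prod_outer_combine_le F hp hb qE).
apply: le_prod_outer => z /= Fz.
have Fv : F (fun n => if (n < N)%N then evens z n else combine f z n).
  apply: (Fup _ _ Fz) => n xn; case: ifP => // geNn.
  by rewrite /combine /f geNn xn.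
by apply: (Ftail _ _ _ Fv); exists N => n; rewrite leqNgt => /negbTE ->.
Qed.

(* Realize [bern (min (p n) (q n))] as whichever of [X_n], [Y_n] is less likely. *)
Lemma prod_outer_mul_le_min (p q : nat -> R) F :
  prob_seq p -> prob_seq q -> upward_closed F ->
  (forall x y, F x -> F y -> F (fun n => x n && y n)) ->
  prod_outer p F * prod_outer q F <=
  prod_outer (fun n => Num.min (p n) (q n)) F.
Proof.
move=> hp hq Fup Fmeet.
pose f n (x y : bool) := if (p n < q n)%R then x else y.
have rE n : Num.min (p n) (q n) = bern2 (p n) (q n) (f n).
  by rewrite /bern2 /bern !big_bool /f minElt; case: ifP => _ /=; ring.
apply: le_trans (prod_outer_rect_ge F F hp hq) _.
apply: le_trans (prod_outer_combine_le F hp hq rE).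
apply: le_prod_outer => z [Fx Fy]; apply: (Fup _ _ (Fmeet _ _ Fx Fy)).
by move=> n /andP[xn yn]; rewrite /combine /f; case: ifP.
Qed.

Lemma prod_outer_compl_ge (s : nat -> R) F : prob_seq s ->
  (forall x, F x -> ~ F (fun n => ~~ x n)) ->
  prod_outer (fun n => 1 - s n)%R F <= prod_outer s (~` F).
Proof.
move=> hs Fdisj; have ha := prob_seq_compl hs.
pose f (n : nat) (x y : bool) := ~~ x.
have sE n : s n = bern2 (1 - s n)%R (s n) (f n).
  by rewrite /bern2 /bern !big_bool /f /=; ring.
apply: le_trans (prod_outer_evens_ge F ha hs) _.
apply: le_trans (prod_outer_combine_le (~` F) ha hs sE).
by apply: le_prod_outer => z /Fdisj.
Qed.

End couplings.

Section zero_one.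
Variable R : realType.
Local Open Scope ereal_scope.
Variables (s : nat -> R) (F : set (nat -> bool)).
Hypotheses (hs : prob_seq s) (Ftail : tail_set F).

(* Take the first [L] coordinates from one sample and the rest from an
   independent one: the result lies in [V] and, [F] being a tail set, in [~` F]. *)
Lemma prod_outer_determined_compl_le L V : determined_by L V ->
  prod_outer s V * prod_outer s (~` F) <= prod_outer s (V `&` ~` F).
Proof.
move=> hV; pose f n (x y : bool) := if (n < L)%N then x else y.
have sE n : s n = bern2 (s n) (s n) (f n).
  by rewrite /bern2 /bern !big_bool /f; case: ifP => _ /=; ring.
apply: le_trans (prod_outer_rect_ge V (~` F) hs hs) _.
apply: le_trans (prod_outer_combine_le _ hs hs sE).
apply: le_prod_outer => z [Vz nFz]; split.
  by apply: hV Vz => i lti; rewrite /combine /f lti.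
move=> Fz; apply: nFz; apply: Ftail Fz; exists L => n.
by rewrite leqNgt /combine /f => /negbTE ->.
Qed.

Lemma prod_outer_cover_approx A (c : nat -> seq bool) (eps : R) :
  (0 < eps)%R -> A `<=` \bigcup_k cyl (c k) ->
  \sum_(k <oo) (cyl_weight s (c k))%:E < +oo ->
  exists m, prod_outer s A <= prod_outer s (\bigcup_(k < m) cyl (c k)) + eps%:E.
Proof.
move=> eps0 Ac c_fin.
have w_ge0 k : xpredT k -> 0 <= (cyl_weight s (c k))%:E.
  by move=> _; exact: cyl_weightE_ge0.
have := nneseries_tail_cvg c_fin w_ge0 => /(_ (fun u => u < eps%:E)) [].
  by apply: open_ereal_lt'; rewrite lte_fin.
move=> m _ /(_ m (leqnn m)) tail_lt; exists m.
have cover : A `<=` \bigcup_(k < m) cyl (c k) `|` \bigcup_k cyl (c (k + m)%N).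
  move=> x /Ac [k _ xk]; have [ltkm|lemk] := ltnP k m; first by left; exists k.
  by right; exists (k - m)%N => //; rewrite subnK.
apply: le_trans (le_prod_outer _ cover) _.
apply: le_trans (prod_outer_setU hs _ _) _; apply: leeD2l.
apply: le_trans
  (@prod_outer_cover_le _ s _ (fun k => c (k + m)%N) (@subset_refl _ _)) _.
by rewrite (@nneseries_addn _ (fun k => (cyl_weight s (c k))%:E) m) ?ltW // => k;
  exact: w_ge0.
Qed.

Hypothesis Fmeas : prod_measurable s F.

Lemma prod_outer_cover_compl_le (c : nat -> seq bool) (eps : R) :
  F `<=` \bigcup_k cyl (c k) ->
  \sum_(k <oo) (cyl_weight s (c k))%:E < prod_outer s F + eps%:E ->
  prod_outer s (\bigcup_k cyl (c k) `&` ~` F) <= eps%:E.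
Proof.
move=> Fc lt_eps; have := Fmeas (\bigcup_k cyl (c k)); rewrite setIidr // => muU.
rewrite -(leeD2lE _ _ (prod_outer_fin_num hs F)) -muU.
by apply: le_trans (ltW lt_eps); exact: prod_outer_cover_le.
Qed.

Theorem prod_outer_tail_zero_one : prod_outer s F * prod_outer s (~` F) = 0.
Proof.
apply/le_anti; rewrite mule_ge0 ?prod_outer_ge0 // andbT.
apply/lee_addgt0Pr => eps eps0; rewrite add0e.
have eps2 : (0 < eps / 2)%R by rewrite divr_gt0.
have [c Fc lt_c] := prod_outer_adherent hs F eps2.
have c_fin : \sum_(k <oo) (cyl_weight s (c k))%:E < +oo.
  by apply: lt_trans lt_c _; rewrite -(fineK (prod_outer_fin_num hs F)) -EFinD ltry.
have [m Fm] := prod_outer_cover_approx eps2 Fc c_fin.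
set V := \bigcup_(k < m) cyl (c k).
have VnF : prod_outer s V * prod_outer s (~` F) <= (eps / 2)%:E.
  apply: le_trans (prod_outer_determined_compl_le (@determined_by_cyls c m)) _.
  apply: le_trans (prod_outer_cover_compl_le Fc lt_c).
  by apply: le_prod_outer => x [[k _ xk] nFx]; split => //; exists k.
have nF1 := prod_outer_le1 hs (~` F); have nF0 := prod_outer_ge0 hs (~` F).
move: Fm VnF nF1 nF0.
rewrite -(fineK (prod_outer_fin_num hs F)) -(fineK (prod_outer_fin_num hs V)).
rewrite -(fineK (prod_outer_fin_num hs (~` F))) -!EFinM -EFinD !lee_fin.
nra.
Qed.

End zero_one.

Lemma prod_null_measurable (R : realType) (s : nat -> R) F :
  prob_seq s -> prod_null s F -> prod_measurable s F.
Proof.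
move=> hs F0 X; have XF0 : prod_outer s (X `&` F) = 0%E.
  by apply/le_anti; rewrite prod_outer_ge0 // andbT -F0 le_prod_outer // => x [].
rewrite XF0 add0e; apply/le_anti; rewrite (le_prod_outer s (@subIsetl _ X _)) andbT.
have := prod_outer_setU hs (X `&` F) (X `&` ~` F).
rewrite XF0 add0e; apply: le_trans.
by apply: le_prod_outer => x Xx; have [Fx|nFx] := pselect (F x); [left|right].
Qed.

Section admissible.
Variable R : realType.
Implicit Types s p q : nat -> R.

Lemma admissible_prob_seq s : admissible s -> prob_seq s.
Proof. by move=> hs n; have /andP[s0 s1] := hs n; apply/andP; split; lra. Qed.

Lemma admissible_lt1 s n : admissible s -> s n < 1.
Proof. by move=> hs; have /andP[s0 s1] := hs n; lra. Qed.

Lemma admissible_le_compl s n : admissible s -> s n <= 1 - s n.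
Proof. by move=> hs; have /andP[s0 s1] := hs n; lra. Qed.

Lemma admissible_min p q : admissible p -> admissible q ->
  admissible (fun n => Num.min (p n) (q n)).
Proof.
by move=> hp hq n; rewrite minElt; case: ifP => _; [exact: hp|exact: hq].
Qed.

End admissible.

Section nonprincipal_filter_null.
Variable R : realType.
Variable F : set (nat -> bool).
Hypothesis hF : nonprincipal_filter F.

Lemma prod_null_le (p q : nat -> R) N : admissible p -> admissible q ->
  (forall n, (N <= n)%N -> p n <= q n) -> prod_null q F -> prod_null p F.
Proof.
move=> hp hq pq q0.
apply/le_anti; rewrite (prod_outer_ge0 (admissible_prob_seq hp)) andbT -q0.
apply: (le_prod_outer_tail _ _ _ pq); try exact: admissible_prob_seq.
- by move=> n; exact: admissible_lt1.
- exact: nonprincipal_filter_upward.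
- exact: nonprincipal_filter_tail.
Qed.

Lemma prod_measurable_null (s : nat -> R) : admissible s ->
  prod_measurable s F -> prod_null s F.
Proof.
move=> hs Fmeas; have ps := admissible_prob_seq hs.
have /eqP := prod_outer_tail_zero_one ps (nonprincipal_filter_tail hF) Fmeas.
rewrite mule_eq0 => /orP[/eqP //|/eqP nF0].
apply/le_anti; rewrite (prod_outer_ge0 ps) andbT -nF0.
apply: le_trans (prod_outer_compl_ge ps (nonprincipal_filter_compl hF)).
apply: (le_prod_outer_tail (N := 0)) => //.
- exact: prob_seq_compl.
- by move=> n; exact: admissible_lt1.
- by move=> n _; exact: admissible_le_compl.
- exact: nonprincipal_filter_upward.
- exact: nonprincipal_filter_tail.
Qed.

Lemma prod_null_min (p q : nat -> R) : admissible p -> admissible q ->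
  prod_null (fun n => Num.min (p n) (q n)) F -> prod_null p F \/ prod_null q F.
Proof.
move=> hp hq r0; have [pp pq] := (admissible_prob_seq hp, admissible_prob_seq hq).
have := prod_outer_mul_le_min pp pq (nonprincipal_filter_upward hF)
  (nonprincipal_filter_meet hF).
rewrite [leRHS]r0 => pq_le0.
have /eqP : (prod_outer p F * prod_outer q F = 0)%E.
  by apply/le_anti; rewrite pq_le0 /=; apply: mule_ge0; exact: prod_outer_ge0.
by rewrite mule_eq0 => /orP[/eqP|/eqP]; [left|right].
Qed.

End nonprincipal_filter_null.

Unset Implicit Arguments.
Theorem theorem1p3 (R : realType) (F : set (nat -> bool))
  (hF : nonprincipal_filter F) :
  (forall p q : nat -> R, admissible p -> admissible q ->
     (exists N, forall n, (N <= n)%N -> p n <= q n) ->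
     prod_null q F -> prod_null p F)
  /\
  (forall p q : nat -> R, admissible p -> admissible q ->
     ~ prod_measurable p F -> ~ prod_measurable q F ->
     ~ prod_measurable (fun n => Num.min (p n) (q n)) F).
Proof.
split=> [p q hp hq [N pq]|p q hp hq p_nm q_nm r_m].
  exact: (prod_null_le hF hp hq pq).
have r0 := prod_measurable_null hF (admissible_min hp hq) r_m.
have [p0|q0] := prod_null_min hF hp hq r0.
- exact/p_nm/prod_null_measurable/p0/admissible_prob_seq.
- exact/q_nm/prod_null_measurable/q0/admissible_prob_seq.
Qed.
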